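(* For every graph $G$ on $n$ vertices, $\operatorname{box}(G)\le MVC(G)+2=n-\alpha(G)+2$.
   Context: $MVC(G)$ is the minimum cardinality of a vertex cover of $G$ (a set of vertices meeting every edge) and $\alpha(G)$ is the maximum size of an independent set. The boxicity $\operatorname{box}(G)$ is the minimum $b$ such that $G$ is the intersection graph of axis-parallel boxes in $\mathbb{R}^b$ (products of $b$ closed intervals), one box per vertex. *)

From mathcomp Require Import all_boot all_order all_algebra.
From mathcomp Require Import reals.
Set Implicit Arguments. Unset Strict Implicit. Unset Printing Implicit Defensive.
Import Order.TTheory GRing.Theory Num.Theory.

Definition simple_graph (T : finType) (e : rel T) : Prop :=
  symmetric e /\ irreflexive e.

Definition vertex_cover (T : finType) (e : rel T) (C : {set T}) : bool :=
  [forall x, forall y, e x y ==> (x \in C) || (y \in C)].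

Definition independent (T : finType) (e : rel T) (S : {set T}) : bool :=
  [forall x in S, forall y in S, ~~ e x y].

Lemma vertex_cover_setT (T : finType) (e : rel T) :
  exists k, [exists C : {set T}, vertex_cover e C && (#|C| == k)].
Proof.
exists #|[set: T]|; apply/existsP; exists [set: T]; rewrite eqxx andbT.
by apply/forallP => x; apply/forallP => y; rewrite in_setT implybT.
Qed.

Definition mvc (T : finType) (e : rel T) : nat := ex_minn (vertex_cover_setT e).

Definition alpha (T : finType) (e : rel T) : nat :=
  \max_(S : {set T} | independent e S) #|S|.

Local Open Scope ring_scope.

(* G is the intersection graph of axis-parallel boxes in R^d: each vertex x
   gets the (nonempty) box prod_i [lo x i, hi x i], and two distinct vertices
   are adjacent iff their boxes intersect. *)
Definition box_representable (R : realType) (T : finType) (e : rel T) (d : nat)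
  : Prop :=
  exists (lo hi : T -> 'I_d -> R),
    (forall x i, lo x i <= hi x i) /\
    (forall x y, x != y ->
       (e x y <-> forall i, lo x i <= hi y i /\ lo y i <= hi x i)).

Definition is_boxicity (R : realType) (T : finType) (e : rel T) (b : nat) : Prop :=
  box_representable R e b /\
  (forall b', box_representable R e b' -> (b <= b')%N).

From mathcomp Require Import all_boot all_order all_algebra.
From mathcomp Require Import reals.
From mathcomp Require Import boolp zify.
Set Implicit Arguments. Unset Strict Implicit. Unset Printing Implicit Defensive.
Import Order.TTheory GRing.Theory Num.Theory.

(* The complement of a vertex cover is independent and vice versa, so a
   minimum vertex cover C has |C| = n - alpha(G).  Boxes in dimension |C| + 1
   realise G: the star coordinate of c in C makes c the point 0, its
   neighbours the interval [0, 1] and every other vertex the point 1, so it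
   separates c from exactly its non-neighbours; one last rank coordinate makes
   the vertices of the independent set T \ C pairwise distinct points and
   gives each vertex of C the whole range.  Symmetry of the edge relation is
   all that is used. *)

Section CoverIndependent.
Variables (T : finType) (e : rel T).

Lemma vertex_cover_edge (C : {set T}) x y :
  vertex_cover e C -> e x y -> (x \in C) || (y \in C).
Proof. by move=> /forallP/(_ x)/forallP/(_ y)/implyP. Qed.

Lemma vertex_cover_setC_independent (C : {set T}) :
  vertex_cover e C -> independent e (~: C).
Proof.
move=> C_cover; apply/forallP => x; apply/implyP; rewrite in_setC => xC.
apply/forallP => y; apply/implyP; rewrite in_setC => yC.
by apply/negP => /(vertex_cover_edge C_cover); rewrite (negbTE xC) (negbTE yC).
Qed.

Lemma independent_setC_vertex_cover (S : {set T}) :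
  independent e S -> vertex_cover e (~: S).
Proof.
move=> /forallP S_indep; apply/forallP => x; apply/forallP => y; apply/implyP => exy.
rewrite !in_setC -negb_and; apply/negP => /andP [xS yS].
by move: (S_indep x) => /implyP/(_ xS)/forallP/(_ y)/implyP/(_ yS); rewrite exy.
Qed.

Lemma mvc_cover : exists2 C : {set T}, vertex_cover e C & #|C| = mvc e.
Proof.
by rewrite /mvc; case: ex_minnP => m /existsP [C /andP [C_cover /eqP <-]] _; exists C.
Qed.

Lemma mvc_min (C : {set T}) : vertex_cover e C -> mvc e <= #|C|.
Proof.
move=> C_cover; rewrite /mvc; case: ex_minnP => m _; apply.
by apply/existsP; exists C; rewrite C_cover eqxx.
Qed.

Lemma mvc_alpha : mvc e = #|T| - alpha e.
Proof.
have [C C_cover C_card] := mvc_cover.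
have alpha_ge : #|~: C| <= alpha e.
  exact: (leq_bigmax_cond _ (vertex_cover_setC_independent C_cover)).
have alpha_le : alpha e <= #|T| - mvc e.
  apply/bigmax_leqP => S S_indep.
  have := mvc_min (independent_setC_vertex_cover S_indep).
  have := cardsC S; lia.
have := cardsC C; lia.
Qed.

End CoverIndependent.

Section BoxesFromCover.
Variables (R : realType) (T : finType) (e : rel T) (C : {set T}).
Hypotheses (e_sym : symmetric e) (C_cover : vertex_cover e C).

Local Open Scope ring_scope.

Definition star_lo (c x : T) : R := if (x == c) || e x c then 0 else 1.
Definition star_hi (c x : T) : R := if x == c then 0 else 1.

Definition rank_lo (x : T) : R := if x \in C then 0 else (enum_rank x)%:R.
Definition rank_hi (x : T) : R := if x \in C then #|T|%:R else (enum_rank x)%:R.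

Lemma star_lo_le_hi c x : star_lo c x <= star_hi c x.
Proof. by rewrite /star_lo /star_hi; case: eqP; case: (e x c); rewrite ?ler01. Qed.

Lemma star_lo_le_hi_edge c x y : e x y -> star_lo c x <= star_hi c y.
Proof.
move=> exy; rewrite /star_lo /star_hi.
case: (eqVneq y c) => [<-|_]; first by rewrite exy orbT.
by case: ifP; rewrite ?ler01.
Qed.

Lemma star_meet_edge c x y :
  e x y -> star_lo c x <= star_hi c y /\ star_lo c y <= star_hi c x.
Proof. by move=> exy; split; apply: star_lo_le_hi_edge; rewrite // e_sym. Qed.

Lemma star_separate c x : x != c -> ~~ e x c -> star_hi c c < star_lo c x.
Proof. by move=> xc nexc; rewrite /star_lo /star_hi eqxx (negbTE xc) (negbTE nexc) ltr01. Qed.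

Lemma rank_lo_le_hi x : rank_lo x <= rank_hi x.
Proof. by rewrite /rank_lo /rank_hi; case: (x \in C); rewrite ?ler0n. Qed.

Lemma rank_meet_cover x y :
  x \in C -> rank_lo x <= rank_hi y /\ rank_lo y <= rank_hi x.
Proof.
move=> xC; rewrite /rank_lo /rank_hi xC; split; first by case: (y \in C); rewrite ?ler0n.
by case: (y \in C); rewrite ?ler0n // ler_nat ltnW.
Qed.

Lemma rank_separate x y : x \notin C -> y \notin C -> x != y ->
  ~ (rank_lo x <= rank_hi y /\ rank_lo y <= rank_hi x).
Proof.
rewrite /rank_lo /rank_hi => /negbTE -> /negbTE -> xy; rewrite !ler_nat => -[xy_le yx_le].
by move: xy => /eqP; apply; apply/enum_rank_inj/val_inj/anti_leq; rewrite xy_le yx_le.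
Qed.

Definition cover_lo (x : T) (i : 'I_#|C|.+1) : R :=
  if unlift ord_max i is Some j then star_lo (@enum_val T (mem C) j) x else rank_lo x.
Definition cover_hi (x : T) (i : 'I_#|C|.+1) : R :=
  if unlift ord_max i is Some j then star_hi (@enum_val T (mem C) j) x else rank_hi x.

Lemma cover_separate c y : c \in C -> y != c -> ~~ e y c ->
  exists i, cover_hi c i < cover_lo y i.
Proof.
move=> cC yc neyc; exists (lift ord_max (enum_rank_in cC c)).
by rewrite /cover_lo /cover_hi liftK enum_rankK_in // star_separate.
Qed.

Lemma box_representable_cover : box_representable R e #|C|.+1.
Proof.
exists cover_lo, cover_hi; split.
  move=> x i; rewrite /cover_lo /cover_hi.
  by case: unlift => [j|]; [exact: star_lo_le_hi | exact: rank_lo_le_hi].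
move=> x y xy; split.
  move=> exy i; rewrite /cover_lo /cover_hi; case: unlift => [j|]; first exact: star_meet_edge.
  case/orP: (vertex_cover_edge C_cover exy) => [xC|yC]; first exact: rank_meet_cover.
  by case: (rank_meet_cover x yC).
move=> meet; apply/negPn/negP => nexy.
have yx : y != x by rewrite eq_sym.
have neyx : ~~ e y x by rewrite e_sym.
have [xC|xC] := boolP (x \in C).
  by have [i] := cover_separate xC yx neyx; rewrite ltNge (meet i).2.
have [yC|yC] := boolP (y \in C).
  by have [i] := cover_separate yC xy nexy; rewrite ltNge (meet i).1.
apply: (rank_separate xC yC xy).
by have := meet ord_max; rewrite /cover_lo /cover_hi unlift_none.
Qed.

End BoxesFromCover.

Lemma boxicity_exists (R : realType) (T : finType) (e : rel T) d :
  box_representable R e d -> exists2 b, is_boxicity R e b & (b <= d)%N.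
Proof.
move=> rep_d.
have rep_ex : exists b, `[< box_representable R e b >] by exists d; apply/asboolP.
case: (ex_minnP rep_ex) => b /asboolP rep_b b_min.
exists b; first by split=> // b' /asboolP; exact: b_min.
exact/b_min/asboolP.
Qed.

Theorem theorem15 (R : realType) (T : finType) (e : rel T) :
  simple_graph e ->
  mvc e = (#|T| - alpha e)%N /\
  exists b : nat, is_boxicity R e b /\ (b <= mvc e + 2)%N.
Proof.
move=> [e_sym _]; split; first exact: mvc_alpha.
have [C C_cover <-] := mvc_cover e.
have [b box_b b_le] := boxicity_exists (box_representable_cover R e_sym C_cover).
by exists b; split=> //; rewrite addn2 ltnW.
Qed.
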